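(* Let $k\ge 1$ be an integer, let $H$ be a multigraph with feedback vertex number at most $k$ in which every vertex has degree at least 3, and let $B\subseteq V(H)$ be a $k$-significant subset of vertices of $H$. Then the feedback vertex number of $H-B$ is at most $k-1$.
   Context: Multigraphs are undirected and may contain parallel edges and self-loops; a self-loop is a cycle of length one and two parallel edges form a cycle of length two; the degree of a vertex is the number of incident edges, with self-loops counted twice. The feedback vertex number is the minimum number of vertices whose removal leaves an acyclic multigraph. A subset $B\subseteq V(H)$ is $k$-significant if $|B|\le 12k$ and $B$ contains every vertex of $H$ of degree at least $|E(H)|/(3k)$. *)

From mathcomp Require Import all_boot all_order.
Set Implicit Arguments. Unset Strict Implicit. Unset Printing Implicit Defensive.

(* A multigraph on vertex type V with edge type E: each edge e has an
   (unordered) pair of endpoints [ends e]; self-loops are edges with equal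
   endpoints, parallel edges are distinct edges with the same endpoints. *)
Section Multigraph.
Variables (V E : finType) (ends : E -> V * V).

Definition joins (e : E) (x y : V) : bool :=
  (ends e == (x, y)) || (ends e == (y, x)).

(* degree, self-loops counted twice *)
Definition mdeg (v : V) : nat :=
  #|[set e | (ends e).1 == v]| + #|[set e | (ends e).2 == v]|.

(* Length 1 = self-loop, length 2 = two parallel edges. *)
Definition has_cycle_in (X : {set V}) : Prop :=
  exists n (v : 'I_n.+1 -> V) (e : 'I_n.+1 -> E),
    [/\ injective v, injective e, (forall i, v i \in X)
      & forall i, joins (e i) (v i) (v (ordS i))].

Definition acyclic_in (X : {set V}) : Prop := ~ has_cycle_in X.

Definition fvn_le (X : {set V}) (k : nat) : Prop :=
  exists S : {set V}, [/\ S \subset X, #|S| <= k & acyclic_in (X :\: S)].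

(* B is k-significant: |B| <= 12k and B contains every vertex of degree
   at least |E(H)|/(3k)  (written as 3k * deg v >= |E|). *)
Definition significant (k : nat) (B : {set V}) : Prop :=
  #|B| <= 12 * k /\ forall v, #|E| <= 3 * k * mdeg v -> v \in B.

End Multigraph.

From mathcomp Require Import all_boot all_order zify.
Set Implicit Arguments. Unset Strict Implicit. Unset Printing Implicit Defensive.

(* Let S be a feedback vertex set with |S| <= k.  If S meets B, then S \ B
   does the job in H - B.  Otherwise the forest F = H - S gives a contradiction
   by counting edges: minimum degree 3 yields
     3 |V \ S| <= 2 e(F) + e(S, V \ S) <= 2 |V \ S| + e(S, V \ S),
   so e(F) <= |V \ S| <= e(S, V \ S) and |E| <= 2 (sum of the degrees over S).
   Hence some vertex of S has degree at least |E|/(2k), and it lies in B.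
   The bound e(F) <= |V(F)| follows by deleting vertices of degree at most 1;
   such a vertex exists in every nonempty acyclic multigraph, since otherwise
   a path with distinct vertices and edges could always be prolonged or closed
   into a cycle. *)

Lemma sum_eq_mem (T : finType) (A : {set T}) x : \sum_(y in A) (x == y) = (x \in A).
Proof.
have [xA | xNA] := boolP (x \in A).
  by rewrite (bigD1 x) //= eqxx big1 // => y /andP[_ /negbTE]; rewrite eq_sym => ->.
by rewrite big1 // => y yA; case: eqP yA xNA => // ->->.
Qed.

Section Multigraph.
Variables (V E : finType) (ends : E -> V * V).

Local Notation joins := (joins ends).
Local Notation mdeg := (mdeg ends).
Local Notation has_cycle_in := (has_cycle_in ends).
Local Notation acyclic_in := (acyclic_in ends).

Lemma joinsC e x y : joins e x y = joins e y x.
Proof. by rewrite /joins orbC. Qed.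

Lemma joins_end e x y a b : joins e x y -> joins e a b -> x = a \/ x = b.
Proof.
rewrite /joins; case: (ends e) => c d.
by case/orP=> /eqP[h1 h2]; case/orP=> /eqP[h3 h4]; subst; auto.
Qed.

Lemma acyclic_inS (X Y : {set V}) : Y \subset X -> acyclic_in X -> acyclic_in Y.
Proof.
move=> sYX acX [n [v [e [v_inj e_inj vY ve]]]]; apply: acX.
by exists n, v, e; split=> // i; apply: (subsetP sYX).
Qed.

Definition incid (X : {set V}) (v : V) (e : E) : nat :=
  (((ends e).1 == v) && ((ends e).2 \in X)) + (((ends e).2 == v) && ((ends e).1 \in X)).

Definition mdeg_in (X : {set V}) (v : V) : nat := \sum_e incid X v e.

Definition edges_in (X : {set V}) : nat := \sum_e (((ends e).1 \in X) && ((ends e).2 \in X)).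

Lemma mdegE v : mdeg v = \sum_e (((ends e).1 == v) + ((ends e).2 == v)).
Proof.
rewrite /mdeg big_split /= -!sum1_card.
by congr (_ + _); rewrite big_mkcond; apply: eq_bigr => e _; rewrite inE; case: eqP.
Qed.

Lemma sum_mdeg (A : {set V}) :
  \sum_(v in A) mdeg v = \sum_e (((ends e).1 \in A) + ((ends e).2 \in A)).
Proof.
under eq_bigr do rewrite mdegE.
rewrite exchange_big; apply: eq_bigr => e _; rewrite big_split /=.
by rewrite !sum_eq_mem.
Qed.

Lemma mdeg_in_edge (X : {set V}) v (G : {set E}) :
  \sum_(e in G) incid X v e < mdeg_in X v ->
  exists f w, [/\ f \notin G, w \in X & joins f v w].
Proof.
rewrite /mdeg_in [X in _ < X](bigID (mem G)) /= -[X in X < _]addn0 ltn_add2l lt0n sum_nat_eq0.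
case/forallPn=> f; rewrite negb_imply /incid addn_eq0 negb_and !eqb0 !negbK.
case/andP=> fG /orP[/andP[/eqP f1 f2] | /andP[/eqP f2 f1]].
  by exists f, (ends f).2; rewrite /joins -f1 -surjective_pairing eqxx.
by exists f, (ends f).1; rewrite /joins -f2 -surjective_pairing eqxx orbT.
Qed.

Lemma incid_le1 (X : {set V}) v e : (ends e).1 != (ends e).2 -> incid X v e <= 1.
Proof.
move=> ne; rewrite /incid; case: eqP => [e1|_]; case: eqP => [e2|_] //=.
- by rewrite e1 e2 eqxx in ne.
- by case: (_ \in X).
- by case: (_ \in X).
Qed.

Lemma edges_inD1 (X : {set V}) x : edges_in X <= edges_in (X :\ x) + mdeg_in X x.
Proof.
rewrite /edges_in /mdeg_in -big_split; apply: leq_sum => e _; rewrite /incid !inE.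
by case: eqP; case: eqP; case: (_ \in X); case: (_ \in X).
Qed.

Section Paths.
Variables (X : {set V}) (v0 : V) (e0 : E).

Definition is_path (p : seq V) (q : seq E) : Prop :=
  [/\ size p = (size q).+1, uniq p, uniq q, {subset p <= X} &
      forall j, j < size q -> joins (nth e0 q j) (nth v0 p j) (nth v0 p j.+1)].

Lemma is_path_take p q i : is_path p q -> i < size p -> is_path (take i.+1 p) (take i q).
Proof.
case=> sp up uq pX pj ip; have iq : i <= size q by rewrite -ltnS -sp.
split; rewrite ?take_uniq ?size_takel //.
- by move=> x /mem_take; apply: pX.
- by move=> j ji; rewrite !nth_take; [apply: pj (leq_trans ji iq) | lia..].
Qed.

Lemma is_path_cons p q f w :
  is_path p q -> w \in X -> w \notin p -> f \notin q -> joins f w (head v0 p) ->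
  is_path (w :: p) (f :: q).
Proof.
case=> sp up uq pX pj wX wp fq fw; split=> /=; rewrite ?sp ?wp ?fq //.
- by move=> x /predU1P[-> | /pX].
- by case=> [_ | j /pj]; rewrite // -nth0.
Qed.

Lemma is_path_close p q f :
  is_path p q -> f \notin q -> joins f (nth v0 p (size q)) (head v0 p) ->
  has_cycle_in X.
Proof.
case=> sp up uq pX pj fq fc; have ip (i : 'I_(size q).+1) : i < size p by rewrite sp.
exists (size q), (fun i => nth v0 p i), (fun i => nth e0 (rcons q f) i); split.
- by move=> i j /eqP; rewrite nth_uniq // => /eqP/val_inj.
- by move=> i j /eqP; rewrite nth_uniq ?size_rcons ?rcons_uniq ?fq // => /eqP/val_inj.
- by move=> i; apply/pX/mem_nth.
move=> i; rewrite /= nth_rcons.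
have [iq | ] := ltnP i (size q); first by rewrite modn_small ?ltnS //; apply: pj.
move=> qi; have -> : nat_of_ord i = size q by apply/eqP; rewrite eqn_leq qi -ltnS ltn_ord.
by rewrite eqxx modnn nth0.
Qed.

Lemma is_path_head_edge p q f w :
  is_path p q -> joins f (head v0 p) w -> f \in q -> f = head e0 q.
Proof.
case=> sp up uq pX pj fw fq; have iq : index f q < size q by rewrite index_mem.
have := pj _ iq; rewrite nth_index //.
case: (index f q) iq (nth_index e0 fq) => [_ <- _ | j jq _]; first by rewrite nth0.
case/(joins_end fw)=> /eqP; rewrite -nth0 nth_uniq ?sp //; lia.
Qed.

Lemma is_path_edge_nonloop p q g : is_path p q -> g \in q -> (ends g).1 != (ends g).2.
Proof.
case=> sp up uq pX pj gq; have iq : index g q < size q by rewrite index_mem.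
have := pj _ iq; rewrite nth_index //.
have : nth v0 p (index g q) != nth v0 p (index g q).+1 by rewrite nth_uniq ?sp //; lia.
rewrite /joins; case: (ends g) => a b /= + /orP[]/eqP[-> ->] => //; by rewrite eq_sym.
Qed.

Hypotheses (acX : acyclic_in X) (degX : forall v, v \in X -> 1 < mdeg_in X v).

Lemma is_path_extend p q :
  is_path p q -> exists p' q', is_path p' q' /\ size p' = (size p).+1.
Proof.
move=> pq; have [sp up uq pX pj] := pq.
set v := head v0 p; have vX : v \in X by rewrite /v -nth0; apply/pX/mem_nth; rewrite sp.
(* G holds the edge that led to v; it is not a loop, so it accounts for at
   most one of the two incidences at v guaranteed by degX. *)
pose G := if q is g :: _ then [set g] else set0.
have [f [w [fG wX fvw]]] : exists f w, [/\ f \notin G, w \in X & joins f v w].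
  apply: mdeg_in_edge; apply: leq_trans (degX vX); rewrite ltnS /G; clear G.
  case: q pq {sp uq pj} => [|g q] pq; first by rewrite big_set0.
  by rewrite big_set1 incid_le1 // (is_path_edge_nonloop pq) ?mem_head.
have fq : f \notin q.
  apply/negP => fq; have fg := is_path_head_edge pq fvw fq; move: fG; rewrite /G; clear G.
  by case: q fq fg {pq sp uq pj} => //= g q _ ->; rewrite in_set1 eqxx.
have [wp | wNp] := boolP (w \in p); last first.
  exists (w :: p), (f :: q); split; last by [].
  by apply: is_path_cons; rewrite // joinsC.
exfalso; apply: acX.
have ip := wp; rewrite -index_mem in ip.
apply: (is_path_close (is_path_take pq ip) (f := f)).
- by apply: contra fq; apply: mem_take.
- rewrite size_takel; last by rewrite -ltnS -sp.
  rewrite nth_take // nth_index // joinsC.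
  by move: fvw; rewrite /v; case: (p).
Qed.

End Paths.

Lemma acyclic_leaf (X : {set V}) :
  acyclic_in X -> X != set0 -> exists2 v, v \in X & mdeg_in X v <= 1.
Proof.
move=> acX /set0Pn[x xX]; apply/exists_inP/contraT.
rewrite negb_exists_in => /forall_inP degX; have {}degX v : v \in X -> 1 < mdeg_in X v.
  by move=> /degX; rewrite -ltnNge.
(* any edge serves as the default value e0 for nth *)
have [e0 [_ _]] : exists e (w : V), [/\ e \notin set0, w \in X & joins e x w].
  by apply: mdeg_in_edge; rewrite big_set0 ltnW // degX.
have long n : exists p q, is_path X x e0 p q /\ size p = n.+1.
  elim: n => [|n [p [q [pq <-]]]]; last exact: is_path_extend pq.
  by exists [:: x], [::]; split=> //; split=> // y; rewrite inE => /eqP ->.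
have [p [q [[_ up _ pX _] sp]]] := long #|X|.
have pX' : {subset p <= enum X} by move=> y /pX; rewrite mem_enum.
by have := uniq_leq_size up pX'; rewrite sp -cardE ltnn.
Qed.

Lemma acyclic_edges_in (X : {set V}) : acyclic_in X -> edges_in X <= #|X|.
Proof.
have [n] := ubnP #|X|; elim: n X => // n IH X; rewrite ltnS => Xn acX.
have [-> | X0] := eqVneq X set0.
  by rewrite /edges_in big1 // => e _; rewrite inE.
have [x xX xleaf] := acyclic_leaf acX X0.
have cardX : #|X| = #|X :\ x|.+1 by rewrite (cardsD1 x X) xX.
have := IH (X :\ x) _ (acyclic_inS (subsetDl X [set x]) acX).
have := edges_inD1 X x; lia.
Qed.

Lemma card_edges_le_fvs (S : {set V}) :
  (forall v, v \notin S -> 3 <= mdeg v) -> acyclic_in (~: S) ->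
  #|E| <= 2 * \sum_(v in S) mdeg v.
Proof.
move=> deg3 acS; have forest := acyclic_edges_in acS.
have deg_out : 3 * #|~: S| <= \sum_(v in ~: S) mdeg v.
  by rewrite mulnC -sum_nat_const; apply: leq_sum => v; rewrite inE; apply: deg3.
have : #|E| + \sum_(v in ~: S) mdeg v <= 2 * \sum_(v in S) mdeg v + 3 * edges_in (~: S).
  rewrite !sum_mdeg /edges_in !big_distrr -sum1_card -!big_split /=.
  by apply: leq_sum => e _; rewrite !inE; case: (_ \in S); case: (_ \in S).
lia.
Qed.

Lemma fvs_heavy_vertex (S : {set V}) k :
  S != set0 -> #|S| <= k -> (forall v, v \notin S -> 3 <= mdeg v) ->
  acyclic_in (~: S) -> exists2 v, v \in S & #|E| <= 2 * k * mdeg v.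
Proof.
move=> S0 Sk deg3 acS; rewrite -card_gt0 in S0.
have [v vS maxv] := eq_bigmax_cond mdeg S0; exists v => //.
rewrite (leq_trans (card_edges_le_fvs deg3 acS)) // -mulnA leq_mul2l /=.
rewrite (@leq_trans (#|S| * mdeg v)) ?leq_mul2r ?Sk ?orbT // -sum_nat_const.
by apply: leq_sum => u uS; rewrite -maxv; apply: leq_bigmax_cond.
Qed.

End Multigraph.

Theorem corollary6p2 (V E : finType) (ends : E -> V * V) (k : nat) (B : {set V}) :
  1 <= k ->
  fvn_le ends [set: V] k ->
  (forall v : V, 3 <= mdeg ends v) ->
  significant ends k B ->
  fvn_le ends (~: B) (k - 1).
Proof.
move=> _ [S [_ Sk acS]] deg3 [_ heavyB]; rewrite setTD in acS.
exists (S :\: B); split.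
- by apply/subsetP => x; rewrite !inE => /andP[].
- have [-> | S0] := eqVneq S set0; first by rewrite set0D cards0.
  have [v vS vheavy] := fvs_heavy_vertex S0 Sk (fun v _ => deg3 v) acS.
  have vB : v \in B.
    by apply: heavyB; rewrite (leq_trans vheavy) // !leq_mul2r leqnSn !orbT.
  have : #|S :\: B| <= #|S :\ v| by apply/subset_leq_card/setDS; rewrite sub1set.
  by have := cardsD1 v S; rewrite vS; lia.
- apply: acyclic_inS acS; apply/subsetP => x.
  by rewrite !inE; case: (x \in B); case: (x \in S).
Qed.
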